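(* Let $X$ be a connected weighted bipartite graph and let $u$ be a vertex of $X$ such that $0\notin\Phi_{\mathbf e_u}$. Then $u$ is not sedentary, i.e. $\inf_{t>0}|U(t)_{u,u}|=0$.
   Context: All graphs are simple, loopless, connected and undirected, with nonzero real edge weights; $A=A(X)$ is the weighted adjacency matrix ($A_{u,v}=\omega_{u,v}$, the weight of edge $\{u,v\}$, and $0$ for non-adjacent pairs). Write the spectral decomposition $A=\sum_{\lambda}\lambda E_\lambda$ over the distinct eigenvalues $\lambda$ of $A$, where $E_\lambda$ is the orthogonal projection onto the $\lambda$-eigenspace. The transition matrix is $U(t)=e^{itA}$, $t\in\mathbb R$. The eigenvalue support of $u$ is $\Phi_{\mathbf e_u}=\{\lambda: E_\lambda\mathbf e_u\neq 0\}$. A vertex $u$ is sedentary if $\inf_{t>0}|U(t)_{u,u}|\ge C$ for some constant $0<C\le 1$, and not sedentary if $\inf_{t>0}|U(t)_{u,u}|=0$. *)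

From HB Require Import structures.
From mathcomp Require Import all_boot all_order all_algebra.
From mathcomp Require Import all_classical all_reals all_analysis.
Set Implicit Arguments. Unset Strict Implicit. Unset Printing Implicit Defensive.
Import Order.TTheory GRing.Theory Num.Theory.
Local Open Scope ring_scope.
Local Open Scope classical_set_scope.

Section Defs.
Variable R : realType.
Variable n : nat.
Implicit Types (A : 'M[R]_n) (u v : 'I_n).

(* A weighted simple loopless undirected graph on vertex set 'I_n, given by its
   weighted adjacency matrix: symmetric, zero diagonal; {i,j} is an edge iff
   A i j != 0 (so edge weights are nonzero reals). *)
Definition weighted_graph A : Prop := A^T = A /\ forall i, A i i = 0.

Definition adj A : rel 'I_n := fun i j => A i j != 0.

Definition connected_graph A : Prop := forall i j, connect (adj A) i j.

Definition bipartite A : Prop :=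
  exists c : 'I_n -> bool, forall i j, adj A i j -> c i != c j.

(* k-th power of a square matrix (valid for every n, including n = 0). *)
Definition mxpow A (k : nat) : 'M[R]_n := iter k (mulmx A) 1%:M.

Definition ipow_re (k : nat) : R := if odd k then 0 else (-1) ^+ k./2.
Definition ipow_im (k : nat) : R := if odd k then (-1) ^+ k./2 else 0.

(* U(t) = e^{itA} = \sum_k (i t)^k / k! A^k, entrywise real and imaginary parts *)
Definition U_re A (t : R) u v : R :=
  limn (fun N => \sum_(0 <= k < N) ipow_re k * t ^+ k / k`!%:R * mxpow A k u v).
Definition U_im A (t : R) u v : R :=
  limn (fun N => \sum_(0 <= k < N) ipow_im k * t ^+ k / k`!%:R * mxpow A k u v).

Definition U_abs A (t : R) u v : R :=
  Num.sqrt (U_re A t u v ^+ 2 + U_im A t u v ^+ 2).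

Definition evec u : 'cV[R]_n := delta_mx u 0.

Definition dotv (x y : 'cV[R]_n) : R := \sum_i x i 0 * y i 0.

(* p = E_lam v : p lies in the lam-eigenspace of A and v - p is orthogonal to it *)
Definition is_eig_proj A (lam : R) (v p : 'cV[R]_n) : Prop :=
  A *m p = lam *: p /\
  forall x : 'cV[R]_n, A *m x = lam *: x -> dotv (v - p) x = 0.

(* eigenvalue support Phi_{e_u} = { lam : E_lam e_u <> 0 } *)
Definition eig_support A u : set R :=
  [set lam | exists p, is_eig_proj A lam (evec u) p /\ p != 0].

End Defs.

From HB Require Import structures.
From mathcomp Require Import all_boot all_order all_algebra.
From mathcomp Require Import all_classical all_reals all_analysis.
From mathcomp Require Import complex.
From mathcomp Require Import lra ring.
Import Order.TTheory GRing.Theory Num.Theory.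
Import numFieldNormedType.Exports.
Local Open Scope ring_scope.

(* For real symmetric A with an orthonormal eigenbasis (v_j) and eigenvalues
   d_j, the weights w_j = |v_j(u)|^2 give (A^k)_{uu} = \sum_j w_j d_j^k, and
   0 is not in the eigenvalue support of u exactly when w_j = 0 whenever
   d_j = 0.  In a bipartite graph closed walks have even length, so the odd
   moments vanish and U(t)_{uu} = g(t) := \sum_j w_j cos(t d_j) is real.
   Since g(0) = 1, it suffices that g takes a negative value at some t > 0:
   then g, hence U(t)_{uu}, vanishes at some t > 0 and the infimum is 0.  If
   g were nonnegative at all multiples of a small h > 0, the Fejer sums
   \sum_j w_j F_N(h d_j / 2) = \sum_{k<N} (1 + 2 \sum_{i<k} g((i+1)h)) would be
   at least N, whereas they are bounded by \sum_j w_j / sin^2(h d_j / 2). *)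

Section Fejer.
Context {R : realType}.
Implicit Types (a : R) (k N : nat).

Definition dirichlet a k : R := 1 + 2 * \sum_(0 <= m < k) cos (m.+1%:R * (2 * a)).

Definition fejer a N : R := \sum_(0 <= k < N) dirichlet a k.

Lemma sin_mul_dirichlet a k : sin a * dirichlet a k = sin ((2 * k%:R + 1) * a).
Proof.
elim: k => [|k IHk].
  by rewrite /dirichlet big_geq // mulr0n !mulr0 addr0 add0r mulr1 mul1r.
rewrite /dirichlet big_nat_recr //= -/(dirichlet a k).
have -> : sin a * (1 + 2 * (\sum_(0 <= m < k) cos (m.+1%:R * (2 * a))
    + cos (k.+1%:R * (2 * a)))) = sin a * dirichlet a k
    + 2 * sin a * cos (k.+1%:R * (2 * a)) by rewrite /dirichlet; ring.
rewrite IHk; set y := k.+1%:R * (2 * a).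
have -> : (2 * k%:R + 1) * a = y - a by rewrite /y -natr1; ring.
have -> : (2 * k.+1%:R + 1) * a = y + a by rewrite /y; ring.
rewrite sinB sinD; ring.
Qed.

Lemma fejerE a N : 2 * sin a ^+ 2 * fejer a N = 1 - cos (2 * N%:R * a).
Proof.
elim: N => [|N IHN].
  by rewrite /fejer big_geq // mulr0n !mulr0 mul0r cos0 subrr.
rewrite /fejer big_nat_recr //= -/(fejer a N) mulrDr IHN.
rewrite -[_ * dirichlet a N]mulrA [_ ^+ 2]expr2 -[_ * sin a * _]mulrA.
rewrite sin_mul_dirichlet; set y := (2 * N%:R + 1) * a.
have -> : 2 * N%:R * a = y - a by rewrite /y; ring.
have -> : 2 * N.+1%:R * a = y + a by rewrite /y -natr1; ring.
rewrite cosB cosD; ring.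
Qed.

Lemma fejer_le a N : sin a != 0 -> fejer a N <= (sin a ^+ 2)^-1.
Proof.
move=> sa0; have sa2 : 0 < sin a ^+ 2 by rewrite exprn_even_gt0.
rewrite -(ler_pM2l sa2) mulfV ?gt_eqF //.
have := fejerE a N; have := cos_geN1 (2 * N%:R * a); nra.
Qed.

End Fejer.

Lemma sin_neq0 (R : realType) (a : R) : a != 0 -> `|a| < 2 -> sin a != 0.
Proof.
move=> a0 a2; have a_gt0 : 0 < `|a| by rewrite normr_gt0.
have : 0 < sin `|a| by apply: sin2_gt0; rewrite a_gt0.
have [a_ge0|a_lt0] := lerP 0 a.
  by rewrite ger0_norm //; exact: lt0r_neq0.
by rewrite ltr0_norm // sinN oppr_gt0; exact: ltr0_neq0.
Qed.

Section CosineSum.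
Context {R : realType} {m : nat}.
Variables w d : 'I_m -> R.

Definition cos_sum (t : R) : R := \sum_j w j * cos (t * d j).

Lemma continuous_cos_sum : continuous cos_sum.
Proof.
apply: (continuous_big (op := +%R) (x0 := 0) (P := xpredT)).
  exact: add_continuous.
move=> j _ t; apply: cvgMl_tmp.
apply: (@continuous_comp _ _ _ (fun t : R => t * d j) cos).
  by apply: cvgMr_tmp; exact: cvg_id.
exact: continuous_cos.
Qed.

Hypothesis w_ge0 : forall j, 0 <= w j.
Hypothesis w_sum1 : \sum_j w j = 1.
Hypothesis w_d0 : forall j, d j = 0 -> w j = 0.

Lemma cos_sum0 : cos_sum 0 = 1.
Proof. by rewrite -w_sum1; apply: eq_bigr => j _; rewrite mul0r cos0 mulr1. Qed.

Lemma sum_dirichlet (h : R) k :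
  \sum_j w j * dirichlet (h * d j / 2) k
  = 1 + 2 * \sum_(0 <= i < k) cos_sum (i.+1%:R * h).
Proof.
rewrite /dirichlet; under eq_bigr do rewrite mulrDr mulr1.
rewrite big_split /= w_sum1; congr (_ + _).
rewrite /cos_sum exchange_big big_distrr /=; apply: eq_bigr => j _.
rewrite mulrCA; congr (2 * _); rewrite !big_distrr /=; apply: eq_bigr => i _.
by congr (w j * cos _); field.
Qed.

Lemma cos_sum_neg : exists2 t, 0 < t & cos_sum t < 0.
Proof.
have S_ge0 : 0 <= \sum_j `|d j| by rewrite sumr_ge0.
set h := (1 + \sum_j `|d j|)^-1.
have h_gt0 : 0 < h by rewrite invr_gt0; lra.
set a := fun j => h * d j / 2.
have sin_a j : w j != 0 -> sin (a j) != 0.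
  move=> wj0; have dj0 : d j != 0 by apply: contra wj0 => /eqP/w_d0 ->.
  apply: sin_neq0.
    by rewrite /a !mulf_eq0 (gt_eqF h_gt0) (negPf dj0) invr_eq0 pnatr_eq0.
  have dj_le : `|d j| <= \sum_i `|d i|.
    by rewrite (bigD1 j) //= lerDl sumr_ge0.
  have hdj : `|h * d j| < 1.
    by rewrite normrM gtr0_norm // mulrC ltr_pdivrMr ?mul1r; lra.
  rewrite /a normrM normfV normr_nat; lra.
pose C := \sum_j w j / sin (a j) ^+ 2.
have fejer_bound N : \sum_j w j * fejer (a j) N <= C.
  apply: ler_sum => j _; have [->|wj0] := eqVneq (w j) 0; first by rewrite !mul0r.
  by apply: ler_wpM2l => //; apply: fejer_le; apply: sin_a.
apply: contrapT => cos_sum_ge0.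
have {}cos_sum_ge0 k : 0 <= cos_sum (k.+1%:R * h).
  rewrite leNgt; apply/negP => gk_lt0; apply: cos_sum_ge0.
  by exists (k.+1%:R * h); rewrite ?mulr_gt0.
have fejer_large N : N%:R <= \sum_j w j * fejer (a j) N.
  under eq_bigr do rewrite /fejer big_distrr /=.
  rewrite exchange_big /= -[N in N%:R]subn0 -sumr_const_nat.
  apply: ler_sum => k _; rewrite sum_dirichlet lerDl.
  by rewrite mulr_ge0 // sumr_ge0.
have C_ge0 : 0 <= C by rewrite sumr_ge0 // => j _; rewrite divr_ge0 ?sqr_ge0.
have := archi_boundP C_ge0; have := fejer_large (Num.bound C).
have := fejer_bound (Num.bound C); lra.
Qed.

Lemma cos_sum_root : exists2 c, 0 < c & cos_sum c = 0.
Proof.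
have [t t_gt0 t_neg] := cos_sum_neg.
have [c] : exists2 c, c \in `[0, t] & cos_sum c = 0.
  apply: IVT; first exact: ltW.
    exact/continuous_subspaceT/continuous_cos_sum.
  by rewrite cos_sum0 ge_min le_max (ltW t_neg) ler01 orbT.
rewrite in_itv /= => /andP[c_ge0 _] gc0; exists c => //.
rewrite lt_neqAle c_ge0 andbT; apply/eqP => c0.
by have := cos_sum0; rewrite c0; lra.
Qed.

End CosineSum.

Local Open Scope classical_set_scope.

Section TransitionMatrix.
Context {R : realType} {n : nat} {A : 'M[R]_n}.

Lemma mxpowS k : mxpow A k.+1 = A *m mxpow A k.
Proof. by []. Qed.

Lemma mxpow_parity {c : 'I_n -> bool} : (forall i j, adj A i j -> c i != c j) ->
  forall k i j, mxpow A k i j != 0 -> c j = c i (+) odd k.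
Proof.
move=> c_proper; elim=> [|k IHk] i j.
  rewrite /mxpow /= mxE addbF.
  by case: (i =P j) => [->|_]; rewrite ?mulr0n ?eqxx.
rewrite mxpowS mxE => Akij.
have /existsP[l] : [exists l, A i l * mxpow A k l j != 0].
  apply: contraNT Akij; rewrite negb_exists => /forallP Ak0.
  by apply/eqP/big1 => l _; apply/eqP; move: (Ak0 l); rewrite negbK.
rewrite mulf_eq0 negb_or => /andP[Ail /IHk ->].
have -> : c l = ~~ c i by move: (c_proper i l Ail); case: (c i); case: (c l).
by rewrite /=; case: (c i); case: (odd k).
Qed.

Lemma bipartite_mxpow_odd u k : bipartite A -> odd k -> mxpow A k u u = 0.
Proof.
move=> [c c_proper] k_odd; apply: contraTeq k_odd => /(mxpow_parity c_proper).
by case: (c u); case: (odd k).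
Qed.

Lemma bipartite_U_im u t : bipartite A -> U_im A t u u = 0.
Proof.
move=> A_bip; rewrite /U_im (_ : (fun N => _) = fun=> 0) ?lim_cst //.
apply: funext => N; apply: big1 => k _; rewrite /ipow_im.
case: ifP => [k_odd|_]; last by rewrite !mul0r.
by rewrite bipartite_mxpow_odd ?mulr0.
Qed.

Lemma U_re_moments {m : nat} (w d : 'I_m -> R) u t :
  (forall k, mxpow A k u u = \sum_j w j * d j ^+ k) ->
  U_re A t u u = cos_sum w d t.
Proof.
move=> moments; rewrite /U_re.
rewrite (_ : (fun N => _) = fun N => \sum_j w j * series (cos_coeff (t * d j)) N).
  apply: (cvg_lim (@Rhausdorff R)).
  apply: (cvg_big (op := +%R) (x0 := 0) (P := xpredT)); first exact: add_continuous.
  move=> j _; apply: cvgMl_tmp.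
  by have := @is_cvg_series_cos_coeff R (t * d j); rewrite [in X in _ -> _ --> X]unlock.
apply: funext => N; rewrite /series /=.
under eq_bigr do rewrite moments big_distrr /=.
rewrite exchange_big /=; apply: eq_bigr => j _.
rewrite big_distrr /=; apply: eq_bigr => k _.
rewrite /cos_coeff /ipow_re /=; case: (odd k) => /=; rewrite ?exprMn -?exprnP;
  set F := k`!%:R; set S := (-1) ^+ k./2; set T := t ^+ k; set D := d j ^+ k;
  by clearbody F S T D; ring.
Qed.

End TransitionMatrix.

Section UnitaryDiagonalization.
Local Open Scope sesquilinear_scope.
Context {C : numClosedFieldType} {n : nat}.
Variables (P : 'M[C]_n) (X : 'rV[C]_n).
Hypothesis P_unitary : P \is unitarymx.

Local Notation M := (P^t* *m diag_mx X *m P).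

Let P_mulmxC : P *m P^t* = 1%:M.
Proof. exact/unitarymxP. Qed.

Let P_mulCmx : P^t* *m P = 1%:M.
Proof. by have /unitarymxP := (etrans (trmxC_unitary P) P_unitary); rewrite trmxCK. Qed.

Let conj_diag_mulmx (d e : 'rV[C]_n) :
  (P^t* *m diag_mx d *m P) *m (P^t* *m diag_mx e *m P)
  = P^t* *m diag_mx (\row_j (d 0 j * e 0 j)) *m P.
Proof.
rewrite !mulmxA -[P^t* *m diag_mx d *m P *m P^t*]mulmxA P_mulmxC mulmx1.
by rewrite -[P^t* *m diag_mx d *m diag_mx e]mulmxA mulmx_diag.
Qed.

Definition ker_proj : 'M[C]_n := P^t* *m diag_mx (\row_j (X 0 j == 0)%:R) *m P.

Lemma unitary_diag_iter k :
  iter k (mulmx M) 1%:M = P^t* *m diag_mx (\row_j X 0 j ^+ k) *m P.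
Proof.
elim: k => [|k IHk].
  rewrite (_ : \row_j _ = const_mx 1); last by apply/rowP => j; rewrite !mxE.
  by rewrite diag_const_mx mulmx1 P_mulCmx.
rewrite [LHS]/= IHk conj_diag_mulmx.
by congr (_ *m diag_mx _ *m _); apply/rowP => j; rewrite !mxE exprS.
Qed.

Lemma ker_proj_mulmx : ker_proj *m M = 0.
Proof.
rewrite /ker_proj conj_diag_mulmx.
rewrite (_ : \row_j _ = 0) ?linear0 ?mulmx0 ?mul0mx //.
by apply/rowP => j; rewrite !mxE; case: eqP => [->|]; rewrite ?mulr0 ?mul0r.
Qed.

Lemma ker_proj_fix (x : 'cV[C]_n) : M *m x = 0 -> ker_proj *m x = x.
Proof.
move=> Mx0; have P_M : P *m M = diag_mx X *m P by rewrite !mulmxA P_mulmxC mul1mx.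
have /matrixP DPx0 : diag_mx X *m (P *m x) = 0.
  by rewrite mulmxA -P_M -mulmxA Mx0 mulmx0.
have ZPx : diag_mx (\row_j (X 0 j == 0)%:R) *m (P *m x) = P *m x.
  apply/matrixP => i j; move: (DPx0 i j); rewrite !mul_diag_mx !mxE.
  case: (X 0 i =P 0) => [_ _|Xi0 /eqP]; first by rewrite mul1r.
  by rewrite mulf_eq0 => /orP[/eqP/Xi0 //|/eqP ->]; rewrite mulr0.
by rewrite /ker_proj -!mulmxA ZPx mulmxA P_mulCmx mul1mx.
Qed.

Lemma ker_proj_diag u : ker_proj u u = \sum_(j | X 0 j == 0) (P j u)^* * P j u.
Proof.
rewrite /ker_proj mxE [RHS]big_mkcond; apply: eq_bigr => j _.
by rewrite mul_mx_diag !mxE; case: eqP; rewrite ?mulr1 ?mulr0 ?mul0r.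
Qed.

End UnitaryDiagonalization.

Section RealPart.
Context {R : realType}.
Local Notation rc := (real_complex R).

Lemma Re_sum I (r : seq I) (P : pred I) (F : I -> R[i]) :
  complex.Re (\sum_(i <- r | P i) F i) = \sum_(i <- r | P i) complex.Re (F i).
Proof. by apply: big_morph => [[a b] [c e]|]. Qed.

Lemma Re_mulr_real (z : R[i]) (x : R) : complex.Re (z * rc x) = complex.Re z * x.
Proof. by case: z => a b /=; rewrite mulr0 subr0. Qed.

Lemma Re_realK (z : R[i]) : z \is Num.real -> rc (complex.Re z) = z.
Proof. by move=> /RRe_real ->. Qed.

End RealPart.

Section SymmetricSpectral.
Local Open Scope sesquilinear_scope.
Context {R : realType} {n : nat} {A : 'M[R]_n}.
Hypothesis A_sym : A^T = A.
Local Notation rc := (real_complex R).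

Let Ac := map_mx rc A.
Let P := spectralmx Ac.
Let X := spectral_diag Ac.
Let P_unitary : P \is unitarymx := spectral_unitarymx Ac.

Let Ac_herm : Ac \is hermsymmx.
Proof.
apply: realsym_hermsym.
  apply/is_hermitianmxP; rewrite expr0 scale1r.
  by apply/matrixP => i j; rewrite !mxE -[in LHS]A_sym mxE.
by apply/mxOverP => i j; rewrite mxE; apply/complex_realP; exists (A i j).
Qed.

Let Ac_spectral : Ac = P^t* *m diag_mx X *m P.
Proof.
rewrite -invmx_unitary //; apply/orthomx_spectralP.
exact: hermitian_normalmx.
Qed.

Let eig j := complex.Re (X 0 j).
Let weight u j := complex.Re ((P j u)^* * P j u).

Let eigE j : X 0 j = rc (eig j).
Proof.
apply/esym/Re_realK.
by have /mxOverP := hermitian_spectral_diag_real Ac_herm; apply.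
Qed.

Let weightE u j : (P j u)^* * P j u = rc (weight u j).
Proof. by apply/esym/Re_realK/ger0_real; rewrite mulrC mul_conjC_ge0. Qed.

Let weight_ge0 u j : 0 <= weight u j.
Proof. by rewrite -lecR -weightE mulrC mul_conjC_ge0. Qed.

Let map_mxpow k : map_mx rc (mxpow A k) = iter k (mulmx Ac) 1%:M.
Proof. by elim: k => [|k IHk]; rewrite ?map_mx1 // mxpowS map_mxM IHk. Qed.

Let mxpow_moments u k : mxpow A k u u = \sum_j weight u j * eig j ^+ k.
Proof.
apply: complexI; rewrite rmorph_sum.
have -> : rc (mxpow A k u u) = map_mx rc (mxpow A k) u u by rewrite mxE.
rewrite map_mxpow Ac_spectral unitary_diag_iter // mxE; apply: eq_bigr => j _.
by rewrite mul_mx_diag !mxE eigE rmorphM rmorphXn mulrAC weightE.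
Qed.

(* The u-th row, not column, of ker_proj: then orthogonality to the kernel
   only needs ker_proj x = x on it. *)
Let kernel_proj u : 'cV[R]_n := \col_a complex.Re (ker_proj P X u a).

Let kernel_proj_eig u : is_eig_proj A 0 (evec R u) (kernel_proj u).
Proof.
split.
  rewrite scale0r; apply/colP => b; rewrite !mxE.
  have EAc0 : (ker_proj P X *m Ac) u b = 0.
    by rewrite Ac_spectral ker_proj_mulmx // mxE.
  rewrite -[RHS](_ : complex.Re ((ker_proj P X *m Ac) u b) = 0); last by rewrite EAc0.
  rewrite mxE Re_sum; apply: eq_bigr => a _.
  by rewrite !mxE Re_mulr_real mulrC -[in RHS]A_sym mxE.
move=> x; rewrite scale0r => Ax0.
have Ex : ker_proj P X *m map_mx rc x = map_mx rc x.
  by apply: ker_proj_fix => //; rewrite -Ac_spectral -map_mxM Ax0 map_mx0.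
have px : \sum_i kernel_proj u i 0 * x i 0 = x u 0.
  have /colP/(_ u) := Ex; rewrite !mxE => /(congr1 (@complex.Re R)).
  rewrite Re_sum /= => <-.
  by apply: eq_bigr => i _; rewrite !mxE Re_mulr_real.
rewrite /dotv (eq_bigr (fun i => evec R u i 0 * x i 0 - kernel_proj u i 0 * x i 0)).
  rewrite sumrB px (bigD1 u) //= big1 => [|i iu]; last by rewrite !mxE (negPf iu) mul0r.
  by rewrite !mxE !eqxx mul1r addr0 subrr.
by move=> i _; rewrite [_ i 0]mxE [X in _ + X]mxE mulrBl.
Qed.

Let kernel_proj_uu u : kernel_proj u u 0 = \sum_(j | eig j == 0) weight u j.
Proof.
rewrite mxE ker_proj_diag Re_sum; apply: eq_big => [j|j _]; last by [].
by rewrite eigE fmorph_eq0.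
Qed.

Let weight_eig0 u j : ~ eig_support A u 0 -> eig j = 0 -> weight u j = 0.
Proof.
move=> not_supp eig0; have kp0 : kernel_proj u = 0.
  apply/eqP; apply: contra_notT not_supp => kp_neq0.
  by exists (kernel_proj u); split => //; apply: kernel_proj_eig.
by have := kernel_proj_uu u; rewrite kp0 mxE => /esym/psumr_eq0P ->; rewrite ?eig0.
Qed.

Lemma symmetric_spectral_moments u : ~ eig_support A u 0 ->
  exists w d : 'I_n -> R, [/\ forall j, 0 <= w j, \sum_j w j = 1,
    forall j, d j = 0 -> w j = 0 & forall k, mxpow A k u u = \sum_j w j * d j ^+ k].
Proof.
move=> not_supp; exists (weight u), eig; split.
- exact: weight_ge0.
- transitivity (\sum_j weight u j * eig j ^+ 0).
    by apply: eq_bigr => j _; rewrite mulr1.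
  by rewrite -mxpow_moments /mxpow /= mxE eqxx.
- by move=> j; apply: weight_eig0.
- exact: mxpow_moments.
Qed.

End SymmetricSpectral.

Lemma inf_attained (R : realType) (E : set R) x : E x -> lbound E x -> inf E = x.
Proof.
move=> Ex lbx; apply/le_anti/andP; split; first exact: ge_inf (ex_intro _ x lbx) _ Ex.
by apply: lb_le_inf => //; exists x.
Qed.

Theorem theorem12 (R : realType) (n : nat) (A : 'M[R]_n) (u : 'I_n) :
  weighted_graph A -> connected_graph A -> bipartite A ->
  ~ eig_support A u 0 ->
  inf [set U_abs A t u u | t in [set t : R | 0 < t]] = 0.
Proof.
move=> [A_sym _] _ A_bip not_supp.
have [w [d [w_ge0 w_sum1 w_d0 moments]]] := symmetric_spectral_moments A_sym u not_supp.
have [c c_gt0 cos_sum_c] := cos_sum_root w d w_ge0 w_sum1 w_d0.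
apply: inf_attained; first exists c => //.
  rewrite /U_abs bipartite_U_im // (U_re_moments w d u c moments) cos_sum_c.
  by rewrite expr0n addr0 sqrtr0.
by move=> _ [t _ <-]; apply: sqrtr_ge0.
Qed.
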